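(* If $X$ is a planar Peano continuum which is not semilocally simply connected at $x\in X$, then for every $\epsilon>0$ there exists a closed disk neighborhood $D$ of $x$ in $\mathbb R^2$ of diameter less than $\epsilon$ whose boundary circle is not contained in $X$.
   Context: A planar Peano continuum is a compact, connected, locally path connected subspace of $\mathbb R^2$. *)

(* The plane R^2 is modelled as R * R (product topology,
   which is the Euclidean topology) for an arbitrary R : realType. *)
From HB Require Import structures.
From mathcomp Require Import all_boot all_order all_algebra.
From mathcomp Require Import all_classical all_reals all_analysis.
Set Implicit Arguments. Unset Strict Implicit. Unset Printing Implicit Defensive.
Import Order.TTheory GRing.Theory Num.Theory.
Import numFieldNormedType.Exports.
Local Open Scope classical_set_scope.
Local Open Scope ring_scope.

Section Defs.
Variable R : realType.
Notation P := (R * R)%type.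

Definition sqdist (p q : P) : R := (p.1 - q.1) ^+ 2 + (p.2 - q.2) ^+ 2.

Definition path_in (X : set P) (f : R -> P) : Prop :=
  {within `[0, 1%R], continuous f} /\ f @` `[0, 1%R] `<=` X.

Definition loop_in (X : set P) (x : P) (f : R -> P) : Prop :=
  path_in X f /\ f 0 = x /\ f 1 = x.

Definition nullhomotopic_in (X : set P) (x : P) (f : R -> P) : Prop :=
  exists H : R * R -> P,
    [/\ {within `[0, 1%R] `*` `[0, 1%R], continuous H},
        H @` (`[0, 1%R] `*` `[0, 1%R]) `<=` X,
        (forall s, s \in `[0, 1] -> H (s, 0) = f s /\ H (s, 1) = x) &
        (forall t, t \in `[0, 1] -> H (0, t) = x /\ H (1, t) = x)].

Definition semilocally_simply_connected_at (X : set P) (x : P) : Prop :=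
  exists U : set P, nbhs x U /\
    forall f, loop_in (X `&` U) x f -> nullhomotopic_in X x f.

Definition locally_path_connected (X : set P) : Prop :=
  forall x, X x -> forall U : set P, nbhs x U ->
    exists V : set P, nbhs x V /\
      forall y z, (X `&` V) y -> (X `&` V) z ->
        exists f, path_in (X `&` U) f /\ f 0 = y /\ f 1 = z.

Definition planar_peano_continuum (X : set P) : Prop :=
  [/\ compact X, connected X & locally_path_connected X].

End Defs.

From HB Require Import structures.
From mathcomp Require Import all_boot all_order all_algebra.
From mathcomp Require Import all_classical all_reals all_analysis.
From mathcomp Require Import ring lra.
Import Order.TTheory GRing.Theory Num.Theory.
Import numFieldNormedType.Exports.
Local Open Scope classical_set_scope.
Local Open Scope ring_scope.

(* If every small circle around x lay in X, then X would contain a whole round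
   disk around x, since each point y of the disk lies on the circle centred at x
   through y.  Loops in a disk contract to its centre along straight segments,
   so X would be semilocally simply connected at x. *)

Lemma within_setX_cvg_fst (T U : topologicalType) (A : set T) (B : set U)
    (p : T * U) :
  fst @ within (A `*` B) (nbhs p) --> within A (nbhs p.1).
Proof.
move=> W /= hW.
have : (fst @ nbhs p) (fun y => A y -> W y) by apply: cvg_fst.
rewrite /= /within /= nbhs_simpl /=.
by apply: filterS => q Wq [Aq _]; exact: Wq.
Qed.

Lemma within_setX_cvg_snd (T U : topologicalType) (A : set T) (B : set U)
    (p : T * U) :
  snd @ within (A `*` B) (nbhs p) --> p.2.
Proof.
move=> W /= hW.
have : (snd @ nbhs p) W by apply: cvg_snd.
by rewrite /within /= nbhs_simpl; apply: filterS => q Wq _.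
Qed.

Section PlaneDisks.
Context {R : realType}.
Implicit Types (p q c y : R * R) (r t : R).

Definition segment_pt p q t : R * R :=
  ((1 - t) * p.1 + t * q.1, (1 - t) * p.2 + t * q.2).

Lemma segment_pt0 p q : segment_pt p q 0 = p.
Proof. by case: p => a b; rewrite /segment_pt /=; congr (_, _); ring. Qed.

Lemma segment_pt1 p q : segment_pt p q 1 = q.
Proof. by case: q => a b; rewrite /segment_pt /=; congr (_, _); ring. Qed.

Lemma segment_pt_id p t : segment_pt p p t = p.
Proof. by case: p => a b; rewrite /segment_pt /=; congr (_, _); ring. Qed.

Lemma sqdist_segment_pt p c t :
  sqdist (segment_pt p c t) c = (1 - t) ^+ 2 * sqdist p c.
Proof. by rewrite /sqdist /segment_pt /=; ring. Qed.

Lemma sqdist_ge0 p q : 0 <= sqdist p q.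
Proof. by rewrite /sqdist addr_ge0 // sqr_ge0. Qed.

Lemma sqdist_eq0 p q : (sqdist p q == 0) = (p == q).
Proof.
rewrite /sqdist paddr_eq0 ?sqr_ge0 // !sqrf_eq0 !subr_eq0.
by case: p q => [a b] [a' b']; rewrite xpair_eqE.
Qed.

Lemma sqdist_refl p : sqdist p p = 0.
Proof. by apply/eqP; rewrite sqdist_eq0. Qed.

Definition open_disk c r : set (R * R) := [set y | sqdist y c < r ^+ 2].

Lemma open_disk_nbhs c r : 0 < r -> nbhs c (open_disk c r).
Proof.
move=> r0; apply/nbhs_ballP; exists (r / 2); first by rewrite /=; lra.
move=> y [/= /ltr_normlP[h1 h2] /ltr_normlP[h3 h4]].
rewrite /open_disk /sqdist /=; nra.
Qed.

Definition star_shaped (S : set (R * R)) c :=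
  forall y t, S y -> 0 <= t <= 1 -> S (segment_pt y c t).

Lemma open_disk_star_shaped c r : star_shaped (open_disk c r) c.
Proof.
move=> y t; rewrite /open_disk /= sqdist_segment_pt => ydisk /andP[t0 t1].
apply: le_lt_trans ydisk; apply: ler_piMl; first exact: sqdist_ge0.
by rewrite exprn_ile1 //; lra.
Qed.

Lemma straight_homotopy_continuous (f : R -> R * R) c :
  {within `[0, 1%R], continuous f} ->
  {within `[0, 1%R] `*` `[0, 1%R],
    continuous (fun q : R * R => segment_pt (f q.1) c q.2)}.
Proof.
move=> cf; apply/subspace_continuousP => p [/= p1 _].
have cfp : f @ within `[0, 1%R] (nbhs p.1) --> f p.1.
  by move/subspace_continuousP : cf; apply.
have cf1 : (f \o fst) @ within (`[0, 1%R] `*` `[0, 1%R]) (nbhs p) --> f p.1.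
  exact: cvg_comp (within_setX_cvg_fst _ _ _ _ p) cfp.
have ct := @within_setX_cvg_snd R R `[0, 1%R] `[0, 1%R] p.
rewrite /segment_pt; apply: (@cvg_pair _ _ _ _ (nbhs _) (nbhs _)).
- apply: cvgD; apply: cvgM => //; try apply: cvgB => //; try exact: cvg_cst.
  exact: cvg_comp cf1 (@cvg_fst _ _ _ _ _).
- apply: cvgD; apply: cvgM => //; try apply: cvgB => //; try exact: cvg_cst.
  exact: cvg_comp cf1 (@cvg_snd _ _ _ _ _).
Qed.

Lemma loop_in_subset (S S' : set (R * R)) x f :
  S `<=` S' -> loop_in S x f -> loop_in S' x f.
Proof.
by move=> SS' [[cf fS] fx]; split=> //; split=> //; exact: subset_trans SS'.
Qed.

Lemma star_shaped_loop_nullhomotopic (S Y : set (R * R)) x f :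
  star_shaped S x -> S `<=` Y -> loop_in S x f -> nullhomotopic_in Y x f.
Proof.
move=> Sstar SY [[cf fS] [f0 f1]].
exists (fun q => segment_pt (f q.1) x q.2); split.
- exact: straight_homotopy_continuous.
- move=> _ [[s t] [/= s01 t01] <-]; apply: SY; apply: Sstar.
    by apply: fS; exists s.
  by move: t01; rewrite in_itv.
- by move=> s _; rewrite segment_pt0 segment_pt1.
- by move=> t _; rewrite /= f0 f1 segment_pt_id.
Qed.

Lemma open_disk_sub_of_circles_sub (X : set (R * R)) x d :
  0 <= d -> X x ->
  (forall r, 0 < r -> r < d -> [set y | sqdist y x = r ^+ 2] `<=` X) ->
  open_disk x d `<=` X.
Proof.
move=> d0 Xx circlesX y; rewrite /open_disk /= => yd.
have [->|yx] := eqVneq y x; first exact: Xx.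
have ry0 : 0 < sqdist y x by rewrite lt_def sqdist_eq0 yx sqdist_ge0.
apply: (circlesX (Num.sqrt (sqdist y x))); rewrite ?sqrtr_gt0 //=.
- by rewrite -(ger0_norm d0) -sqrtr_sqr ltr_sqrt // (lt_trans ry0).
- by rewrite sqr_sqrtr // sqdist_ge0.
Qed.

End PlaneDisks.

Theorem lemmaA3 (R : realType) (X : set (R * R)) (x : R * R) :
  planar_peano_continuum X -> X x ->
  ~ semilocally_simply_connected_at X x ->
  forall eps : R, 0 < eps ->
    exists (c : R * R) (r : R),
      [/\ 0 < r, sqdist x c < r ^+ 2, 2 * r < eps &
          exists y : R * R, sqdist y c = r ^+ 2 /\ ~ X y].
Proof.
move=> _ Xx not_sslsc eps eps0; apply: contrapT => circlesX; apply: not_sslsc.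
have diskX : open_disk x (eps / 2) `<=` X.
  apply: open_disk_sub_of_circles_sub => //; first lra.
  move=> r r0 r_lt y yr; apply: contrapT => Xy; apply: circlesX.
  exists x, r; split => //; last by exists y.
    by rewrite sqdist_refl exprn_gt0.
  lra.
exists (open_disk x (eps / 2)); split; first by apply: open_disk_nbhs; lra.
move=> f floop.
apply: star_shaped_loop_nullhomotopic (open_disk_star_shaped _ _) diskX _.
exact: loop_in_subset (@subIsetr _ X _) floop.
Qed.
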